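(* For any direct signaling scheme $\pi$, the procedure CheckPersu$(\pi)$ returns True only if $\pi$ is persuasive, and returns False only if $\pi$ is not persuasive.
   Context: Model: state space $[m]$, common prior $\lambda\in\Delta([m])$, user actions $\{0,1\}$, user utility $\rho:[m]\times\{0,1\}\to\mathbb{R}$; $\omega(i)=(\rho(i,1)-\rho(i,0))\lambda(i)$. Standing assumptions: some state has $\omega(i)>0$ and $\sum_i\omega(i)<0$. In each round the platform commits to a signaling scheme, a state $\theta_t\sim\lambda$ and then a signal are drawn, and the user, who forms the Bayesian posterior, takes action 1 iff her posterior expected utility of action 1 is at least that of action 0. A direct signaling scheme has signals $\{0,1\}$ and sends signal 1 in state $i$ with probability $\pi(i)$; it is persuasive if the user takes action 1 whenever signal 1 is realized. Procedure CheckPersu$(\pi)$: in each successive round commit to $\pi$ and observe the realized signal $\sigma_t$ and action $a_t$; if $\sigma_t=1,a_t=1$ return True; if $\sigma_t=1,a_t=0$ return False; if $\sigma_t=0,a_t=1$ return False; otherwise go to the next round; if no rounds remain return round-exhausted. *)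

From mathcomp Require Import all_boot all_order all_algebra.
Set Implicit Arguments. Unset Strict Implicit. Unset Printing Implicit Defensive.
Import Order.TTheory GRing.Theory Num.Theory.
Local Open Scope ring_scope.

Section Model.
Variables (R : realFieldType) (m : nat).
(* prior lambda, user utility rho (action 1 = true, action 0 = false),
   direct signaling scheme pi : probability of sending signal 1 in state i *)
Variables (lambda : 'I_m -> R) (rho : 'I_m -> bool -> R) (pi : 'I_m -> R).

Definition omega (i : 'I_m) : R := (rho i true - rho i false) * lambda i.

Definition sigProb (s : bool) (i : 'I_m) : R := if s then pi i else 1 - pi i.

Definition signalProb (s : bool) : R := \sum_(j < m) lambda j * sigProb s j.

Definition posterior (s : bool) (i : 'I_m) : R :=
  lambda i * sigProb s i / signalProb s.

Definition userAction (s : bool) : bool :=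
  (\sum_(i < m) posterior s i * rho i false)
    <= (\sum_(i < m) posterior s i * rho i true).

Definition persuasive : Prop := 0 < signalProb true -> userAction true.

Definition realizable (o : 'I_m * bool) : Prop :=
  0 < lambda o.1 /\ 0 < sigProb o.2 o.1.

Inductive outcome := OTrue | OFalse | ORoundExhausted.

(* CheckPersu(pi) run on the sequence of realized (state, signal) pairs of
   the remaining rounds; the action a_t is the user's best response. *)
Fixpoint checkPersu (obs : seq ('I_m * bool)) : outcome :=
  match obs with
  | [::] => ORoundExhausted
  | o :: rest =>
      let s := o.2 in
      let a := userAction s in
      if s && a then OTrue
      else if s && ~~ a then OFalse
      else if ~~ s && a then OFalse
      else checkPersu rest
  end.
End Model.

From mathcomp Require Import all_boot all_order all_algebra.
From mathcomp Require Import ring lra.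
Import Order.TTheory GRing.Theory Num.Theory.
Local Open Scope ring_scope.

(* After a signal s of positive probability the user's action is the sign of
   the unnormalised gain  sum_i omega(i) P(s | i),  the posterior only
   rescaling it by 1 / P(s).  The gains of the two signals add up to
   sum_i omega(i) < 0, so taking action 1 on signal 0 forces a negative gain,
   hence action 0, on signal 1; disobeying signal 1 refutes persuasiveness
   directly. *)

Section CheckPersu.
Variables (R : realFieldType) (m : nat).
Variables (lambda : 'I_m -> R) (rho : 'I_m -> bool -> R) (pi : 'I_m -> R).

Local Notation omega := (omega lambda rho).
Local Notation sigProb := (sigProb pi).
Local Notation signalProb := (signalProb lambda pi).
Local Notation userAction := (userAction lambda rho pi).
Local Notation persuasive := (persuasive lambda rho pi).
Local Notation checkPersu := (checkPersu lambda rho pi).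

Definition signalGain (s : bool) : R := \sum_i omega i * sigProb s i.

Lemma userActionE s :
  0 < signalProb s -> userAction s = (0 <= signalGain s).
Proof.
move=> sp_gt0; rewrite /userAction -subr_ge0 -sumrB.
have -> : \sum_i (posterior lambda pi s i * rho i true
                  - posterior lambda pi s i * rho i false)
          = signalGain s / signalProb s.
  by rewrite mulr_suml; apply: eq_bigr => i _; rewrite /posterior /omega; ring.
by rewrite pmulr_lge0 // invr_gt0.
Qed.

Lemma signalGainD : signalGain true + signalGain false = \sum_i omega i.
Proof. by rewrite -big_split; apply: eq_bigr => i _; rewrite /sigProb /=; ring. Qed.

Lemma checkPersu_OTrue obs : checkPersu obs = OTrue -> userAction true.
Proof.
elim: obs => //= -[i [|]] obs IH /=; case: (userAction _) => //=; exact: IH.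
Qed.

Lemma checkPersu_OFalse obs :
  checkPersu obs = OFalse -> exists2 o, o \in obs & userAction o.2 != o.2.
Proof.
elim: obs => //= -[i s] obs IH /=.
case: s; case act: (userAction _) => //= checkF.
- by exists (i, true); rewrite ?mem_head //= act.
- by exists (i, false); rewrite ?mem_head //= act.
- by have [o o_in dis] := IH checkF; exists o; rewrite // in_cons o_in orbT.
Qed.

Hypothesis lambda_ge0 : forall i, 0 <= lambda i.
Hypothesis pi_in01 : forall i, 0 <= pi i <= 1.

Lemma sigProb_ge0 s i : 0 <= sigProb s i.
Proof. by case: s; have /andP[? ?] := pi_in01 i; rewrite /= ?subr_ge0. Qed.

Lemma signalProb_ge0 s : 0 <= signalProb s.
Proof. by apply: sumr_ge0 => j _; apply: mulr_ge0 => //; apply: sigProb_ge0. Qed.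

Lemma signalProb_gt0 s i :
  0 < lambda i -> 0 < sigProb s i -> 0 < signalProb s.
Proof.
move=> li si; rewrite /signalProb (bigD1 i) //=.
apply: ltr_pwDl; first exact: mulr_gt0.
by apply: sumr_ge0 => j _; apply: mulr_ge0 => //; apply: sigProb_ge0.
Qed.

Lemma signalGain_eq0 s : signalProb s = 0 -> signalGain s = 0.
Proof.
move=> sp0; have term0 j : lambda j * sigProb s j = 0.
  apply: (psumr_eq0P _ sp0) => // k _.
  by apply: mulr_ge0 => //; apply: sigProb_ge0.
by apply: big1 => j _; rewrite /omega -mulrA term0 mulr0.
Qed.

Lemma persuasiveP : persuasive <-> 0 <= signalGain true.
Proof.
split=> [pers | gain_ge0 sp_gt0]; last by rewrite userActionE.
have := signalProb_ge0 true; rewrite le_eqVlt => /orP[/eqP sp0 | sp_gt0].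
  by rewrite signalGain_eq0.
by rewrite -userActionE // pers.
Qed.

Hypothesis sum_omega_lt0 : \sum_i omega i < 0.

Lemma not_persuasive_of_disobeyed s :
  0 < signalProb s -> userAction s != s -> ~ persuasive.
Proof.
case: s => sp_gt0; rewrite (eqb_id, eqbF_neg) ?negbK => dis pers.
  by rewrite (pers sp_gt0) in dis.
move: dis; rewrite userActionE // => gain0_ge0.
move/persuasiveP: pers => gain1_ge0.
have := sum_omega_lt0; rewrite -signalGainD; lra.
Qed.

End CheckPersu.

Theorem mainTheorem4 (R : realFieldType) (m : nat)
    (lambda : 'I_m -> R) (rho : 'I_m -> bool -> R) (pi : 'I_m -> R) :
  (forall i, 0 <= lambda i) -> \sum_(i < m) lambda i = 1 ->
  (exists i, 0 < omega lambda rho i) ->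
  \sum_(i < m) omega lambda rho i < 0 ->
  (forall i, 0 <= pi i <= 1) ->
  forall obs : seq ('I_m * bool),
    (forall o, o \in obs -> realizable lambda pi o) ->
    (checkPersu lambda rho pi obs = OTrue -> persuasive lambda rho pi) /\
    (checkPersu lambda rho pi obs = OFalse -> ~ persuasive lambda rho pi).
Proof.
move=> lambda_ge0 _ _ sum_omega_lt0 pi_in01 obs obs_realizable; split.
  by move/checkPersu_OTrue=> act _.
case/checkPersu_OFalse=> o /obs_realizable[lo so].
apply: not_persuasive_of_disobeyed => //.
exact: signalProb_gt0 lo so.
Qed.
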